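(* Let $\Phi,\Psi:G\to[0,\infty)$ be continuous and let $\Lambda$ be relatively separated in $G$. Then \[\sum_{\lambda\in\Lambda}\Phi(\lambda^{-1}x)\Psi(y^{-1}\lambda)\le\frac{\mathrm{rel}(\Lambda)}{\mu_G(Q)}\,(M_Q\Psi*M_Q^R\Phi)(y^{-1}x)\quad\text{for all }x,y\in G,\] and \[\sum_{\lambda\in\Lambda}\Psi(y^{-1}\lambda)\le\frac{\mathrm{rel}(\Lambda)}{\mu_G(Q)}\|\Psi\|_{\mathcal{W}^L}\quad\text{for all }y\in G.\] Moreover, if $\Theta\in L^1(G)$ is continuous and $\Theta^\vee\in\mathcal{W}^L(G)$, then $D_{\Theta,\Lambda}:\ell^2(\Lambda)\to L^2(G)$, $(c_\lambda)_\lambda\mapsto\sum_{\lambda}c_\lambda L_\lambda\Theta$, is well defined and bounded with $\|D_{\Theta,\Lambda}\|_{\ell^2\to L^2}^2\le\frac{\mathrm{rel}(\Lambda)}{\mu_G(Q)}\|\Theta\|_{L^1}\|\Theta^\vee\|_{\mathcal{W}^L}$, and the defining series converges absolutely $\mu_G$-a.e. on $G$.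
   Context: $G$ is a $\sigma$-compact locally compact group with left Haar measure $\mu_G$; $Q$ a fixed symmetric open relatively compact neighborhood of $e$. $M_Qf(x)=\operatorname{ess\,sup}_{y\in xQ}|f(y)|$, $M_Q^Rf(x)=\operatorname{ess\,sup}_{y\in Qx}|f(y)|$; $*$ is convolution $(f*g)(x)=\int_Gf(y)g(y^{-1}x)\,d\mu_G(y)$. $\mathcal{W}^L(G)=\{f\in L^\infty_{\mathrm{loc}}(G):M_Qf\in L^1(G)\}$ with $\|f\|_{\mathcal{W}^L}=\|M_Qf\|_{L^1}$. $L_yf=f(y^{-1}\cdot)$, $f^\vee(x)=f(x^{-1})$. $\mathrm{rel}(\Lambda)=\sup_{x\in G}\#(\Lambda\cap xQ)$ (with multiplicity); $\Lambda$ is relatively separated if this is finite. *)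

From HB Require Import structures.
From mathcomp Require Import all_boot all_order all_algebra.
From mathcomp Require Import all_classical all_reals all_analysis.
From mathcomp Require Import measurable_realfun.
From mathcomp Require Import complex.
Set Implicit Arguments. Unset Strict Implicit. Unset Printing Implicit Defensive.
Import Order.TTheory GRing.Theory Num.Theory.
Import numFieldNormedType.Exports.
Local Open Scope classical_set_scope.
Local Open Scope ring_scope.

Notation Borel G := (g_sigma_algebraType (@open G)).

Section LCGroup.
Context {G : ptopologicalType}.
Variables (mul : G -> G -> G) (inv : G -> G) (e : G).

Definition lcsc_group : Prop :=
  (forall x y z, mul x (mul y z) = mul (mul x y) z) /\
  (forall x, mul e x = x /\ mul x e = x) /\
  (forall x, mul (inv x) x = e /\ mul x (inv x) = e) /\
  continuous (fun p : G * G => mul p.1 p.2) /\ continuous inv /\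
  hausdorff_space G /\
  locally_compact [set: G] /\
  (exists K : nat -> set G, (forall n, compact (K n)) /\ \bigcup_n K n = [set: G]).

Definition left_haar {R : realType} (mu : {measure set (Borel G) -> \bar R}) : Prop :=
  [/\ (forall (x : G) (A : set (Borel G)), measurable A -> mu (mul x @^-1` A) = mu A),
      (forall K : set G, compact K -> (mu K < +oo)%E),
      (forall U : set G, open U -> U !=set0 -> (0 < mu U)%E),
      (forall A : set (Borel G), measurable A ->
         mu A = ereal_inf [set mu U | U in [set U : set G | open U /\ A `<=` U]]) &
      (forall U : set G, open U ->
         mu U = ereal_sup [set mu K | K in [set K : set G | compact K /\ K `<=` U]])].

Definition good_nbhd (Q : set G) : Prop :=
  [/\ open Q, Q e, (forall x, Q x <-> Q (inv x)) & compact (closure Q)].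

Definition lcoset (x : G) (Q : set G) : set G := mul x @` Q.
Definition rcoset (Q : set G) (x : G) : set G := (fun q => mul q x) @` Q.

Context {R : realType} (mu : {measure set (Borel G) -> \bar R}).

Definition esssup_on (A : set G) (f : G -> R) : \bar R :=
  ereal_inf [set t : \bar R | \forall z \ae mu, A z -> ((`|f z|)%:E <= t)%E].

Definition MQ (Q : set G) (f : G -> R) (x : G) : \bar R := esssup_on (lcoset x Q) f.
Definition MQR (Q : set G) (f : G -> R) (x : G) : \bar R := esssup_on (rcoset Q x) f.

Definition haar_conv (f g : G -> \bar R) (x : G) : \bar R :=
  (\int[mu]_y (f y * g (mul (inv y) x)))%E.

Definition WLnorm (Q : set G) (f : G -> R) : \bar R := (\int[mu]_x MQ Q f x)%E.

Definition in_WL (Q : set G) (f : G -> R) : Prop :=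
  [/\ measurable_fun [set: Borel G] f,
      (forall K : set G, compact K -> (esssup_on K f < +oo)%E),
      measurable_fun [set: Borel G] (MQ Q f : Borel G -> \bar R) &
      (WLnorm Q f < +oo)%E].
End LCGroup.

(* rel(Lambda) = sup_x #(Lambda cap xQ), counted with multiplicity;
   Lambda is given as a family lam indexed by I. *)
Definition rel_sep {R : realType} {G : ptopologicalType} (mul : G -> G -> G)
  (Q : set G) {I : choiceType} (lam : I -> G) : \bar R :=
  ereal_sup (range (fun x : G => \esum_(i in [set i | lcoset mul x Q (lam i)]) (1%E : \bar R))).

Definition cmeasurable {R : realType} {G : ptopologicalType} (f : G -> R[i]) : Prop :=
  measurable_fun [set: Borel G] (fun x => complex.Re (f x)) /\
  measurable_fun [set: Borel G] (fun x => complex.Im (f x)).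

Definition ccontinuous {R : realType} {G : ptopologicalType} (f : G -> R[i]) : Prop :=
  continuous (fun x => complex.Re (f x)) /\ continuous (fun x => complex.Im (f x)).

Definition cabs {R : realType} (z : R[i]) : R :=
  Num.sqrt (complex.Re z ^+ 2 + complex.Im z ^+ 2).

Definition rsum {R : realType} {I : choiceType} (f : I -> R) : R :=
  fine (\esum_(i in [set: I]) (Num.max (f i) 0)%:E) -
  fine (\esum_(i in [set: I]) (Num.max (- f i) 0)%:E).

Definition csum {R : realType} {I : choiceType} (f : I -> R[i]) : R[i] :=
  Complex (rsum (fun i => complex.Re (f i))) (rsum (fun i => complex.Im (f i))).

(* Put b_i := y^-1 lambda_i.  A point w lies in at most rel(Lambda) of the
   cosets b_i Q, each of Haar measure mu(Q); integrating sum_i a_i 1_{b_i Q}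
   therefore gives sum_i a_i <= rel(Lambda) / mu(Q) * int g whenever a_i <= g
   on b_i Q.  Since b_i lies in w Q and lambda_i^-1 x in Q (w^-1 y^-1 x) for
   w in b_i Q, and continuity lets essential suprema dominate point values,
   g = M_Q Psi and g(w) = M_Q Psi(w) * M^R_Q Phi(w^-1 y^-1 x) give the first part.
   For the synthesis operator, the second estimate for Psi = |Theta^v| bounds
   the weights alpha_i(x) := |Theta(lambda_i^-1 x)| by
   sum_i alpha_i(x) <= B := rel(Lambda) / mu(Q) * ||Theta^v||_{W^L}.  Cauchy-Schwarz
   gives |sum_i c_i Theta(lambda_i^-1 x)|^2 <= B * sum_i |c_i|^2 alpha_i(x), whose
   integral is B ||Theta||_1 ||c||_2^2 by left invariance.  Lambda is countable
   (relatively separated in a sigma-compact group); this makes the series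
   measurable and lets sums and integrals be exchanged. *)

From HB Require Import structures.
From mathcomp Require Import all_boot all_order all_algebra.
From mathcomp Require Import all_classical all_reals all_analysis.
From mathcomp Require Import measurable_realfun.
From mathcomp Require Import complex.
From mathcomp Require Import ring lra.
Import Order.TTheory GRing.Theory Num.Theory.
Import numFieldNormedType.Exports.
Local Open Scope classical_set_scope.
Local Open Scope ring_scope.

Set Implicit Arguments. Unset Strict Implicit.

Section FamilySums.
Variables (R : realType) (I : choiceType).
Local Open Scope ereal_scope.

Lemma esumZl (D : set I) (k : R) (a : I -> \bar R) : (0 <= k)%R ->
  (forall i, 0 <= a i) -> \esum_(i in D) (k%:E * a i) = k%:E * \esum_(i in D) a i.
Proof.
move=> k0 a0; rewrite /esum -ereal_supZl //; last first.
  by apply/set0P; exists 0; exists set0; [exact: fsets_set0 | rewrite fsbig_set0].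
rewrite image_comp; congr ereal_sup; apply: eq_imagel => X _ /=.
by rewrite ge0_mule_fsumr.
Qed.

Lemma esum_EFinZl (D : set I) (k : R) (a : I -> R) : (0 <= k)%R -> (forall i, 0 <= a i)%R ->
  \esum_(i in D) (k * a i)%:E = k%:E * \esum_(i in D) (a i)%:E.
Proof. by move=> k0 a0; rewrite -esumZl //; apply: eq_esum => i _; rewrite EFinM. Qed.

Lemma fine_esumZl (D : set I) (k : R) (a : I -> R) : (0 <= k)%R -> (forall i, 0 <= a i)%R ->
  fine (\esum_(i in D) (k * a i)%:E) = (k * fine (\esum_(i in D) (a i)%:E))%R.
Proof.
move=> k0 a0; rewrite esum_EFinZl //.
have : 0 <= \esum_(i in D) (a i)%:E by apply: esum_ge0 => i _; rewrite lee_fin.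
case: (\esum_(i in D) _) => [s| |] //= _.
have [->|kn0] := eqVneq k 0%R; first by rewrite mul0e mul0r.
by rewrite muleC gt0_mulye ?mulr0 // lte_fin lt_neqAle eq_sym kn0.
Qed.

Lemma fine_esumD (D : set I) (a b : I -> R) : (forall i, 0 <= a i)%R -> (forall i, 0 <= b i)%R ->
  \esum_(i in D) (a i)%:E < +oo -> \esum_(i in D) (b i)%:E < +oo ->
  fine (\esum_(i in D) (a i + b i)%:E) =
  (fine (\esum_(i in D) (a i)%:E) + fine (\esum_(i in D) (b i)%:E))%R.
Proof.
move=> a0 b0 fa fb; rewrite (eq_esum (b := fun i => (a i)%:E + (b i)%:E)) //.
rewrite esumD ?fineD // => [||i _|i _]; rewrite ?lee_fin //.
- by rewrite ge0_fin_numE // esum_ge0 // => i _; rewrite lee_fin.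
- by rewrite ge0_fin_numE // esum_ge0 // => i _; rewrite lee_fin.
Qed.

Lemma summable_EFin_le (w m : I -> R) (k : R) : (0 <= k)%R -> (forall i, 0 <= m i)%R ->
  (forall i, `|w i| <= k * m i)%R -> \esum_(i in [set: I]) (m i)%:E < +oo ->
  summable [set: I] (EFin \o w).
Proof.
move=> k0 m0 wm fm; apply: (@le_lt_trans _ _ (\esum_(i in [set: I]) (k * m i)%:E)).
  by apply: le_esum => i _; rewrite lee_fin.
rewrite esum_EFinZl //.
have : 0 <= \esum_(i in [set: I]) (m i)%:E by apply: esum_ge0 => i _; rewrite lee_fin.
by move: fm; case: (\esum_(i in _) _) => // s _ _; rewrite -EFinM ltry.
Qed.

End FamilySums.

Section RealFamilySums.
Variables (R : realType) (I : choiceType).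
Implicit Types u v : I -> R.

Lemma rsumE u : rsum u =
  fine (\esum_(i in [set: I]) (u^\+ i)%:E) - fine (\esum_(i in [set: I]) (u^\- i)%:E).
Proof. by []. Qed.

Lemma rsumZ (k : R) u : rsum (fun i => k * u i) = k * rsum u.
Proof.
rewrite !rsumE; have [k0|/ltW k0] := leP 0 k.
  rewrite (ge0_funrposM u k0) (ge0_funrnegM u k0).
  by rewrite !(fine_esumZl _ k0 (funrpos_ge0 u), fine_esumZl _ k0 (funrneg_ge0 u)) mulrBr.
have nk0 : 0 <= - k by rewrite oppr_ge0.
rewrite (le0_funrposM u k0) (le0_funrnegM u k0).
rewrite !(fine_esumZl _ nk0 (funrpos_ge0 u), fine_esumZl _ nk0 (funrneg_ge0 u)); lra.
Qed.

Lemma ge0_summable_fin_num u : (forall i, 0 <= u i) -> summable [set: I] (EFin \o u) ->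
  \esum_(i in [set: I]) (u i)%:E \is a fin_num.
Proof.
move=> u0.
rewrite summableE.
congr (_ \is a fin_num).
apply: eq_esum => i _.
by rewrite /= ger0_norm.
Qed.

Lemma ge0_summable_lt_pinfty u : (forall i, 0 <= u i) -> summable [set: I] (EFin \o u) ->
  (\esum_(i in [set: I]) (u i)%:E < +oo)%E.
Proof.
move=> u0 /(ge0_summable_fin_num u0).
by rewrite ge0_fin_numE // esum_ge0 // => i _; rewrite lee_fin.
Qed.

Lemma summable_funrpos u : summable [set: I] (EFin \o u) -> summable [set: I] (EFin \o u^\+).
Proof. by move/summable_funepos; rewrite funerpos. Qed.

Lemma summable_funrneg u : summable [set: I] (EFin \o u) -> summable [set: I] (EFin \o u^\-).
Proof. by move/summable_funeneg; rewrite funerneg. Qed.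

Lemma rsumB (p n : I -> R) : (forall i, 0 <= p i) -> (forall i, 0 <= n i) ->
  summable [set: I] (EFin \o p) -> summable [set: I] (EFin \o n) ->
  rsum (fun i => p i - n i) =
  fine (\esum_(i in [set: I]) (p i)%:E) - fine (\esum_(i in [set: I]) (n i)%:E).
Proof.
move=> p0 n0 sp sn.
have pn : ((EFin \o p) \- (EFin \o n))%E = EFin \o (fun i => p i - n i).
  by apply/funext => i; rewrite /= EFinB.
have spn : summable [set: I] (EFin \o (fun i => p i - n i)).
  by rewrite -pn; exact: summableB.
have := esumB sp sn (fun i _ => p0 i) (fun i _ => n0 i).
rewrite pn funerpos funerneg => /(congr1 fine).
have fin (u : I -> R) : (forall i, 0 <= u i) -> summable [set: I] (EFin \o u) ->
    \esum_(i in [set: I]) (EFin \o u) i \is a fin_num.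
  exact: ge0_summable_fin_num.
rewrite (fineB (fin _ p0 sp) (fin _ n0 sn)).
rewrite (fineB (fin _ (funrpos_ge0 _) (summable_funrpos spn))
               (fin _ (funrneg_ge0 _) (summable_funrneg spn))).
by rewrite rsumE => ->.
Qed.

Lemma summable_EFinD u v : summable [set: I] (EFin \o u) -> summable [set: I] (EFin \o v) ->
  summable [set: I] (EFin \o (fun i => u i + v i)).
Proof.
move=> su sv.
have -> : EFin \o (fun i => u i + v i) = ((EFin \o u) \+ (EFin \o v))%E.
  by apply/funext => i; rewrite /= EFinD.
exact: summableD.
Qed.

Lemma funrposBneg_pt u i : u^\+ i - u^\- i = u i.
Proof. by have /(congr1 (@^~ i)) := funrposBneg u; rewrite fctE. Qed.

Lemma rsumD u v : summable [set: I] (EFin \o u) -> summable [set: I] (EFin \o v) ->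
  rsum (fun i => u i + v i) = rsum u + rsum v.
Proof.
move=> su sv.
have -> : (fun i => u i + v i) = (fun i => (u^\+ i + v^\+ i) - (u^\- i + v^\- i)).
  by apply/funext => i; rewrite -(funrposBneg_pt u i) -(funrposBneg_pt v i); lra.
have [su' sv'] := (summable_funrpos su, summable_funrpos sv).
have [su'' sv''] := (summable_funrneg su, summable_funrneg sv).
rewrite rsumB; first last.
- exact: summable_EFinD.
- exact: summable_EFinD.
- by move=> i; rewrite addr_ge0.
- by move=> i; rewrite addr_ge0.
rewrite (fine_esumD (funrpos_ge0 u) (funrpos_ge0 v)
  (ge0_summable_lt_pinfty (funrpos_ge0 u) su') (ge0_summable_lt_pinfty (funrpos_ge0 v) sv')).
rewrite (fine_esumD (funrneg_ge0 u) (funrneg_ge0 v)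
  (ge0_summable_lt_pinfty (funrneg_ge0 u) su'') (ge0_summable_lt_pinfty (funrneg_ge0 v) sv'')).
rewrite !rsumE; lra.
Qed.

Lemma rsum_le_esum_norm u : summable [set: I] (EFin \o u) ->
  rsum u <= fine (\esum_(i in [set: I]) (`|u i|)%:E).
Proof.
move=> su; rewrite rsumE.
have pos_le : fine (\esum_(i in [set: I]) (u^\+ i)%:E) <= fine (\esum_(i in [set: I]) (`|u i|)%:E).
  apply: fine_le; first exact: (ge0_summable_fin_num (@funrpos_ge0 _ _ u) (summable_funrpos su)).
    by move: su; rewrite summableE.
  by apply: le_esum => i _; rewrite lee_fin /funrpos ge_max ler_norm normr_ge0.
have neg_ge0 : 0 <= fine (\esum_(i in [set: I]) (u^\- i)%:E).
  by apply: fine_ge0; apply: esum_ge0 => i _; rewrite lee_fin.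
lra.
Qed.

End RealFamilySums.

Section ComplexFamilySums.
Variables (R : realType) (I : choiceType).

Lemma cabs_ge0 (z : R[i]) : 0 <= cabs z.
Proof. exact: sqrtr_ge0. Qed.

Lemma cabsE (z : R[i]) : cabs z = Normc.normc z.
Proof. by case: z. Qed.

Lemma cabsM (a b : R[i]) : cabs (a * b) = cabs a * cabs b.
Proof. by rewrite !cabsE Normc.normcM. Qed.

Lemma ReM (a b : R[i]) :
  complex.Re (a * b) = complex.Re a * complex.Re b - complex.Im a * complex.Im b.
Proof. by case: a b => [? ?] [? ?]. Qed.

Lemma ImM (a b : R[i]) :
  complex.Im (a * b) = complex.Re a * complex.Im b + complex.Im a * complex.Re b.
Proof. by case: a b => [? ?] [? ?]. Qed.

Lemma Re_le_cabs (z : R[i]) : `|complex.Re z| <= cabs z.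
Proof. by rewrite -sqrtr_sqr /cabs ler_sqrt ?addr_ge0 ?sqr_ge0 // lerDl sqr_ge0. Qed.

Lemma Im_le_cabs (z : R[i]) : `|complex.Im z| <= cabs z.
Proof. by rewrite -sqrtr_sqr /cabs ler_sqrt ?addr_ge0 ?sqr_ge0 // lerDr sqr_ge0. Qed.

Lemma csum_norm_le (z : I -> R[i]) : (\esum_(i in [set: I]) (cabs (z i))%:E < +oo)%E ->
  cabs (csum z) <= fine (\esum_(i in [set: I]) (cabs (z i))%:E).
Proof.
move=> fz; pose u i := complex.Re (z i); pose v i := complex.Im (z i).
set A := rsum u; set B := rsum v; set X := fine _.
have -> : cabs (csum z) = Num.sqrt (A ^+ 2 + B ^+ 2) by [].
set c := Num.sqrt _; have c0 : 0 <= c := sqrtr_ge0 _.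
have dom k (w : I -> R) : 0 <= k -> (forall i, `|w i| <= k * cabs (z i)) ->
    summable [set: I] (EFin \o w).
  by move=> k0 wz; exact: (summable_EFin_le k0 (fun i => cabs_ge0 (z i)) wz fz).
have su : summable [set: I] (EFin \o u) by apply: (dom 1) => // i; rewrite mul1r Re_le_cabs.
have sv : summable [set: I] (EFin \o v) by apply: (dom 1) => // i; rewrite mul1r Im_le_cabs.
have sAu : summable [set: I] (EFin \o (fun i => A * u i)).
  by apply: (dom `|A|) => // i; rewrite normrM ler_wpM2l // Re_le_cabs.
have sBv : summable [set: I] (EFin \o (fun i => B * v i)).
  by apply: (dom `|B|) => // i; rewrite normrM ler_wpM2l // Im_le_cabs.
have cauchy_schwarz i : `|A * u i + B * v i| <= c * cabs (z i).
  rewrite -sqrtr_sqr -sqrtrM ?addr_ge0 ?sqr_ge0 // ler_sqrt ?mulr_ge0 ?addr_ge0 ?sqr_ge0 //.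
  have := sqr_ge0 (A * v i - B * u i); lra.
have sw : summable [set: I] (EFin \o (fun i => A * u i + B * v i)) := dom c _ c0 cauchy_schwarz.
have cc : c * c = rsum (fun i => A * u i + B * v i).
  by rewrite rsumD // !rsumZ -expr2 sqr_sqrtr ?addr_ge0 ?sqr_ge0 // !expr2.
have : c * c <= c * X.
  rewrite cc; apply: le_trans (rsum_le_esum_norm sw) _.
  rewrite -fine_esumZl //; last by move=> i; exact: cabs_ge0.
  apply: fine_le.
  - by move: sw; rewrite summableE.
  - apply: ge0_summable_fin_num => [i|]; first by rewrite mulr_ge0 ?cabs_ge0.
    by apply: (dom c) => // i; rewrite ger0_norm ?mulr_ge0 ?cabs_ge0.
  - by apply: le_esum => i _; rewrite lee_fin cauchy_schwarz.
have [->|cn0] := eqVneq c 0.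
  by move=> _; apply: fine_ge0; apply: esum_ge0 => i _; rewrite lee_fin cabs_ge0.
by rewrite ler_pM2l // lt_neqAle eq_sym cn0.
Qed.

End ComplexFamilySums.

Section CountableFamilies.
Variables (R : realType) (I : choiceType) (h : I -> nat).
Hypothesis h_inj : injective h.
Local Open Scope ereal_scope.

Definition family_seq (a : I -> \bar R) (n : nat) : \bar R :=
  if pselect (exists i, h i = n) is left P then a (projT1 (cid P)) else 0.

Lemma family_seq_h (a : I -> \bar R) i : family_seq a (h i) = a i.
Proof.
rewrite /family_seq; case: pselect => [P|]; last by case; exists i.
by case: (cid P) => j /= /h_inj ->.
Qed.

Lemma family_seq_ge0 (a : I -> \bar R) : (forall i, 0 <= a i) -> forall n, 0 <= family_seq a n.
Proof. by move=> a0 n; rewrite /family_seq; case: pselect. Qed.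

Lemma esum_family_seq (a : I -> \bar R) : (forall i, 0 <= a i) ->
  \esum_(i in [set: I]) a i = \sum_(n <oo) family_seq a n.
Proof.
move=> a0; rewrite nneseries_esumT; last exact: family_seq_ge0.
transitivity (\esum_(n in h @` [set: I]) family_seq a n); last first.
  rewrite esum_mkcond; apply: eq_esum => n _.
  case: ifPn => //; rewrite notin_setE /= => nh.
  rewrite /family_seq; case: pselect => // -[i hi]; exfalso; apply: nh; by exists i.
rewrite esum_image; last by move=> i j _ _; exact: h_inj.
by apply: eq_esum => i _; rewrite family_seq_h.
Qed.

Variables (d : measure_display) (T : measurableType d).

Lemma measurable_family_seq (f : I -> T -> \bar R) n :
  (forall i, measurable_fun setT (f i)) -> measurable_fun setT (fun x => family_seq (f^~ x) n).
Proof. by move=> mf; rewrite /family_seq; case: pselect. Qed.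

Lemma measurable_esum (f : I -> T -> \bar R) :
  (forall i x, 0 <= f i x) -> (forall i, measurable_fun setT (f i)) ->
  measurable_fun setT (fun x => \esum_(i in [set: I]) f i x).
Proof.
move=> f0 mf; rewrite (_ : (fun x => _) =
    (fun x => \sum_(n <oo | n \in (predT : pred nat)) family_seq (f^~ x) n)).
  apply: ge0_emeasurable_sum => [k x _ _|k _]; first exact: family_seq_ge0.
  exact: measurable_family_seq.
by apply/funext => x; rewrite esum_family_seq.
Qed.

Lemma integral_esum (mu : {measure set T -> \bar R}) (f : I -> T -> \bar R) :
  (forall i x, 0 <= f i x) -> (forall i, measurable_fun setT (f i)) ->
  \int[mu]_x (\esum_(i in [set: I]) f i x) = \esum_(i in [set: I]) \int[mu]_x f i x.
Proof.
move=> f0 mf; under eq_integral do rewrite esum_family_seq //.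
rewrite integral_nneseries //; last 2 first.
- by move=> n; exact: measurable_family_seq.
- by move=> n x _; exact: family_seq_ge0.
rewrite esum_family_seq; last by move=> i; apply: integral_ge0 => x _.
apply: eq_eseriesr => n _; rewrite /family_seq; case: pselect => // _.
by rewrite integral0.
Qed.

Lemma measurable_rsum (u : I -> T -> R) : (forall i, measurable_fun setT (u i)) ->
  measurable_fun setT (fun x => rsum (fun i => u i x)).
Proof.
move=> mu_; rewrite /rsum; apply: measurable_funB;
  apply: measurableT_comp (fine_measurable measurableT) _;
  (apply: measurable_esum => [i x|i]; first by rewrite lee_fin le_max lexx orbT);
  apply/measurable_EFinP; apply: measurable_maxr => //; exact: measurable_funN.
Qed.

End CountableFamilies.

Section WeightedCauchySchwarz.
Variables (R : realType) (I : choiceType).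

Lemma sqr_le_of_amgm (X B T : R) : 0 <= X -> 0 <= B -> 0 <= T ->
  (forall t, 0 < t -> 2 * X <= t * B + T / t) -> X ^+ 2 <= B * T.
Proof.
move=> X0 B0 T0 amgm.
have [->|Xn0] := eqVneq X 0; first by rewrite expr0n mulr_ge0.
have Xp : 0 < X by rewrite lt_neqAle eq_sym Xn0.
have [B00|Bn0] := eqVneq B 0.
  have := amgm ((T + 1) / X) (divr_gt0 (ltr_wpDl T0 ltr01) Xp).
  rewrite B00 mulr0 add0r invf_div mulrA ler_pdivlMr; last by rewrite ltr_wpDl.
  nra.
have Bp : 0 < B by rewrite lt_neqAle eq_sym Bn0.
have := amgm (X / B) (divr_gt0 Xp Bp); rewrite divfK // invf_div mulrA => H.
have : X <= T * B / X by lra.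
by rewrite ler_pdivlMr // => ?; rewrite expr2 mulrC; nra.
Qed.

Lemma amgm_weighted (y a t : R) : 0 <= a -> 0 < t -> 2 * (y * a) <= t * a + y ^+ 2 * a / t.
Proof.
move=> a0 t0; have : 0 <= a * (t - y) ^+ 2 / t.
  by rewrite divr_ge0 ?(ltW t0) // mulr_ge0 ?sqr_ge0.
have -> : a * (t - y) ^+ 2 / t = t * a + y ^+ 2 * a / t - 2 * (y * a).
  by field; rewrite lt0r_neq0.
lra.
Qed.

Lemma esum_mul_lt_pinfty (a w : I -> R) : (forall i, 0 <= a i) -> (forall i, 0 <= w i) ->
  (\esum_(i in [set: I]) (w i)%:E < +oo)%E ->
  (\esum_(i in [set: I]) (a i ^+ 2 * w i)%:E < +oo)%E ->
  (\esum_(i in [set: I]) (a i * w i)%:E < +oo)%E.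
Proof.
move=> a0 w0 fw fT.
apply: (@le_lt_trans _ _ (\esum_(i in [set: I]) ((w i)%:E + (a i ^+ 2 * w i)%:E))%E).
  apply: le_esum => i _; rewrite -EFinD lee_fin.
  have := w0 i; have := sqr_ge0 (a i - 1); nra.
by rewrite esumD ?lte_add_pinfty // => i _; rewrite lee_fin ?mulr_ge0 ?sqr_ge0.
Qed.

Lemma esum_cauchy_schwarz (a w : I -> R) (B : R) :
  (forall i, 0 <= a i) -> (forall i, 0 <= w i) ->
  (\esum_(i in [set: I]) (w i)%:E <= B%:E)%E ->
  (\esum_(i in [set: I]) (a i ^+ 2 * w i)%:E < +oo)%E ->
  fine (\esum_(i in [set: I]) (a i * w i)%:E) ^+ 2 <=
  B * fine (\esum_(i in [set: I]) (a i ^+ 2 * w i)%:E).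
Proof.
move=> a0 w0 wB fT.
have ge0_esum (b : I -> R) : (forall i, 0 <= b i) -> (0 <= \esum_(i in [set: I]) (b i)%:E)%E.
  by move=> b0; apply: esum_ge0 => i _; rewrite lee_fin.
have fw : (\esum_(i in [set: I]) (w i)%:E < +oo)%E by apply: le_lt_trans wB _; rewrite ltry.
have fX := esum_mul_lt_pinfty a0 w0 fw fT.
have a2w0 i : 0 <= a i ^+ 2 * w i by rewrite mulr_ge0 ?sqr_ge0.
have aw0 i : 0 <= a i * w i by rewrite mulr_ge0.
set X := \esum_(i in _) (a i * w i)%:E; set T := \esum_(i in _) (a i ^+ 2 * w i)%:E.
have XE : X = (fine X)%:E by rewrite fineK // ge0_fin_numE // ge0_esum.
have TE : T = (fine T)%:E by rewrite fineK // ge0_fin_numE // ge0_esum.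
apply: sqr_le_of_amgm; rewrite ?fine_ge0 ?ge0_esum //.
  by rewrite -lee_fin; apply: le_trans wB; exact: ge0_esum.
move=> t t0; rewrite -lee_fin EFinM -XE -esumZl //.
apply: (@le_trans _ _ (\esum_(i in [set: I]) ((t * w i)%:E + (t^-1 * (a i ^+ 2 * w i))%:E))%E).
  apply: le_esum => i _; rewrite -EFinM -EFinD lee_fin [t^-1 * _]mulrC.
  exact: amgm_weighted.
rewrite esumD => [|i _|i _]; rewrite ?lee_fin ?mulr_ge0 ?invr_ge0 ?(ltW t0) //.
rewrite esum_EFinZl ?(ltW t0) // esum_EFinZl ?invr_ge0 ?(ltW t0) // -/T TE.
rewrite EFinD EFinM [fine T / t]mulrC EFinM.
by apply: leeD; rewrite lee_pmul2l ?lte_fin ?invr_gt0.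
Qed.

End WeightedCauchySchwarz.

Section TopologicalGroup.
Variables (G : ptopologicalType) (mul : G -> G -> G) (inv : G -> G) (e : G).
Hypothesis HG : lcsc_group mul inv e.

Lemma mulgA x y z : mul x (mul y z) = mul (mul x y) z.
Proof. by case: HG. Qed.

Lemma mul1g x : mul e x = x.
Proof. by case: HG => _ [/(_ x) []]. Qed.

Lemma mulg1 x : mul x e = x.
Proof. by case: HG => _ [/(_ x) []]. Qed.

Lemma mulVg x : mul (inv x) x = e.
Proof. by case: HG => _ [_ [/(_ x) []]]. Qed.

Lemma mulgV x : mul x (inv x) = e.
Proof. by case: HG => _ [_ [/(_ x) []]]. Qed.

Lemma mulKg x y : mul (inv x) (mul x y) = y.
Proof. by rewrite mulgA mulVg mul1g. Qed.

Lemma mulKVg x y : mul x (mul (inv x) y) = y.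
Proof. by rewrite mulgA mulgV mul1g. Qed.

Lemma mulgK x y : mul (mul y x) (inv x) = y.
Proof. by rewrite -mulgA mulgV mulg1. Qed.

Lemma mulgKV x y : mul (mul y (inv x)) x = y.
Proof. by rewrite -mulgA mulVg mulg1. Qed.

Lemma invgK x : inv (inv x) = x.
Proof. by rewrite -[LHS]mulg1 -(mulVg x) mulKg. Qed.

Lemma invMg x y : inv (mul x y) = mul (inv y) (inv x).
Proof.
have E : mul (mul x y) (mul (inv y) (inv x)) = e by rewrite -mulgA mulKVg mulgV.
by rewrite -[LHS]mulg1 -E mulKg.
Qed.

Lemma invMKg x y z : mul (inv (mul (inv x) y)) (mul (inv x) z) = mul (inv y) z.
Proof. by rewrite invMg invgK -mulgA mulKVg. Qed.

Lemma lmul_continuous a : continuous (mul a).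
Proof.
case: HG => _ [_ [_ [mulC _]]] x.
apply: (@cvg_comp _ _ _ (fun z => (a, z)) (fun p : G * G => mul p.1 p.2) _ _ _ _ (mulC (a, x))).
by apply: cvg_pair; [exact: cvg_cst | exact: cvg_id].
Qed.

Lemma rmul_continuous a : continuous (fun z => mul z a).
Proof.
case: HG => _ [_ [_ [mulC _]]] x.
apply: (@cvg_comp _ _ _ (fun z => (z, a)) (fun p : G * G => mul p.1 p.2) _ _ _ _ (mulC (x, a))).
by apply: cvg_pair; [exact: cvg_id | exact: cvg_cst].
Qed.

Lemma inv_continuous : continuous inv.
Proof. by case: HG => _ [_ [_ [_ []]]]. Qed.

End TopologicalGroup.

Section Cosets.
Variables (G : ptopologicalType) (mul : G -> G -> G) (inv : G -> G) (e : G) (Q : set G).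
Hypotheses (HG : lcsc_group mul inv e) (HQ : good_nbhd inv e Q).

Lemma lcosetE x : lcoset mul x Q = mul (inv x) @^-1` Q.
Proof.
apply/seteqP; split => z /=; first by case=> q Qq <-; rewrite (mulKg HG).
by move=> Qz; exists (mul (inv x) z) => //; rewrite (mulKVg HG).
Qed.

Lemma rcosetE x : rcoset mul Q x = (fun z => mul z (inv x)) @^-1` Q.
Proof.
apply/seteqP; split => z /=; first by case=> q Qq <-; rewrite (mulgK HG).
by move=> Qz; exists (mul z (inv x)) => //; rewrite (mulgKV HG).
Qed.

Lemma open_lcoset x : open (lcoset mul x Q).
Proof.
rewrite lcosetE; apply: open_comp => [z _|]; first exact: (lmul_continuous HG).
by case: HQ.
Qed.

Lemma open_rcoset x : open (rcoset mul Q x).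
Proof.
rewrite rcosetE; apply: open_comp => [z _|]; first exact: (rmul_continuous HG).
by case: HQ.
Qed.

Lemma lcoset_refl x : lcoset mul x Q x.
Proof. by exists e; [case: HQ | rewrite (mulg1 HG)]. Qed.

Lemma rcoset_refl x : rcoset mul Q x x.
Proof. by exists e; [case: HQ | rewrite (mul1g HG)]. Qed.

Lemma lcoset_sym x z : lcoset mul x Q z -> lcoset mul z Q x.
Proof.
case=> q Qq <-; exists (inv q); last by rewrite (mulgK HG).
by case: HQ => _ _ /(_ q) [/(_ Qq)].
Qed.

Lemma lcosetMl a x z : lcoset mul x Q z -> lcoset mul (mul a x) Q (mul a z).
Proof. by case=> q Qq <-; exists q; rewrite ?(mulgA HG). Qed.

Lemma lcoset_rcoset b w v : lcoset mul b Q w ->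
  rcoset mul Q (mul (inv w) v) (mul (inv b) v).
Proof.
case=> q Qq <-; exists q => //.
by rewrite (invMg HG) -(mulgA HG) (mulgA HG q) (mulgV HG) (mul1g HG).
Qed.

End Cosets.

Lemma open_measurable (G : ptopologicalType) (U : set G) : open U -> measurable (U : set (Borel G)).
Proof. by move=> oU; apply: sub_sigma_algebra. Qed.

Section HaarMeasure.
Variables (R : realType) (G : ptopologicalType) (mul : G -> G -> G) (inv : G -> G) (e : G)
  (mu : {measure set (Borel G) -> \bar R}) (Q : set G).
Hypotheses (HG : lcsc_group mul inv e) (HH : left_haar mul mu) (HQ : good_nbhd inv e Q).
Local Open Scope ereal_scope.

Lemma lmul_measurable a : measurable_fun [set: Borel G] (mul a : Borel G -> Borel G).
Proof.
apply: (@measurability _ _ (Borel G) (Borel G) _ _ (@open G)) => // _ [B oB <-].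
rewrite setTI; apply: open_measurable.
by apply: open_comp => // z _; exact: (lmul_continuous HG).
Qed.

Lemma integral_lmul a (f : G -> \bar R) : measurable_fun [set: Borel G] f ->
  (forall x, 0 <= f x) -> \int[mu]_x f (mul a x) = \int[mu]_x f x.
Proof.
move=> mf f0.
have := ge0_integral_pushforward (lmul_measurable a) mu measurableT mf (fun y _ => f0 y).
rewrite preimage_setT => <-.
apply: eq_measure_integral => [|mphi A mA _]; first exact: lmul_measurable.
by case: HH => mu_inv _ _ _ _; exact: mu_inv.
Qed.

Lemma measure_lcoset x : mu (lcoset mul x Q) = mu Q.
Proof.
rewrite (lcosetE Q HG); case: HH => mu_inv _ _ _ _; apply: mu_inv.
by apply: open_measurable; case: HQ.
Qed.

Lemma measure_nbhd_gt0 : 0 < mu Q.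
Proof. by case: HH => _ _ mu_pos _ _; case: HQ => oQ Qe _ _; apply: mu_pos => //; exists e. Qed.

Lemma measure_nbhd_fin_num : mu Q \is a fin_num.
Proof.
rewrite ge0_fin_numE //; case: HQ => _ _ _ cQ; case: HH => _ mu_fin _ _ _.
apply: le_lt_trans (mu_fin _ cQ); apply: le_measure; rewrite ?inE.
- by apply: open_measurable; case: HQ.
- have : closed (closure Q) by exact: closed_closure.
  by rewrite -openC => /open_measurable /measurableC; rewrite setCK.
- exact: subset_closure.
Qed.

Lemma le_esssup_on (f : G -> R) (A : set G) z : continuous f -> open A -> A z ->
  (`|f z|)%:E <= esssup_on mu A f.
Proof.
move=> cf oA Az; apply/ereal_infP => t [N [mN muN0 sub]].
rewrite leNgt; apply/negP => tlt.
pose V := A `&` (fun x => `|f x|%R) @^-1` [set r : R | t < r%:E].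
have oV : open V.
  apply: openI => //; apply: open_comp => [x _|]; last exact: open_ereal_gt.
  by apply: continuous_comp; [exact: cf | exact: norm_continuous].
have : 0 < mu V by case: HH => _ _ mu_pos _ _; apply: mu_pos => //; exists z.
have : mu V <= mu N.
  apply: le_measure; rewrite ?inE //; first exact: open_measurable.
  by move=> x [Ax tx]; apply: sub => /= /(_ Ax); rewrite leNgt tx.
by rewrite muN0 => /le_lt_trans lt /lt; rewrite ltxx.
Qed.

Lemma le_MQ (f : G -> R) w z : continuous f -> lcoset mul w Q z ->
  (`|f z|)%:E <= MQ mul mu Q f w.
Proof. by move=> cf wQz; apply: le_esssup_on => //; exact: (open_lcoset HG HQ). Qed.

Lemma le_MQR (f : G -> R) w z : continuous f -> rcoset mul Q w z ->
  (`|f z|)%:E <= MQR mul mu Q f w.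
Proof. by move=> cf Qwz; apply: le_esssup_on => //; exact: (open_rcoset HG HQ). Qed.

Lemma MQ_ge0 (f : G -> R) w : continuous f -> 0 <= MQ mul mu Q f w.
Proof. by move=> cf; apply: le_trans (le_MQ cf (lcoset_refl HG HQ w)). Qed.

Lemma MQR_ge0 (f : G -> R) w : continuous f -> 0 <= MQR mul mu Q f w.
Proof. by move=> cf; apply: le_trans (le_MQR cf (rcoset_refl HG HQ w)). Qed.

End HaarMeasure.

Section NonnegativeIntegrals.
Context d (T : measurableType d) (R : realType) (mu : {measure set T -> \bar R}).
Local Open Scope ereal_scope.

(* Unlike [ge0_le_integral], no measurability is required: M_Q f is not known
   to be measurable. *)
Lemma le_ge0_integral (f g : T -> \bar R) : (forall x, 0 <= f x) -> (forall x, f x <= g x) ->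
  \int[mu]_x f x <= \int[mu]_x g x.
Proof.
move=> f0 fg; have g0 x : 0 <= g x by apply: le_trans (fg x).
rewrite (ge0_integralTE mu f0) (ge0_integralTE mu g0) /=.
apply/ereal_supP => _ [h hf <-]; apply: ereal_sup_ubound; exists h => //.
by move=> x; apply: le_trans (fg x).
Qed.

Lemma integral_fsum_indic (I : choiceType) (X : set I) (c : I -> R) (U : I -> set T) :
  finite_set X -> (forall i, 0 <= c i)%R -> (forall i, measurable (U i)) ->
  \int[mu]_x (\sum_(i \in X) (c i)%:E * (\1_(U i) x)%:E) =
  \sum_(i \in X) (c i)%:E * mu (U i).
Proof.
move=> fX c0 mU; rewrite fsbig_finite //; under eq_integral do rewrite fsbig_finite //.
rewrite ge0_integral_sum // => [|i|i x _]; last by rewrite mule_ge0 ?lee_fin ?indicE.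
- apply: eq_bigr => i _; rewrite ge0_integralZl_EFin ?integral_indic ?setIT //.
  by apply/measurable_EFinP; exact: measurable_indic.
- by apply: measurable_funeM; apply/measurable_EFinP; exact: measurable_indic.
Qed.

End NonnegativeIntegrals.

Lemma fsum_indic_overlap_le (R : realType) (T : Type) (I : choiceType) (X : set I) (a : I -> R)
    (U : I -> set T) (g : \bar R) (w : T) (r : R) :
  finite_set X -> 0 < r -> (forall i, 0 <= a i) -> (0 <= g)%E ->
  (forall i, U i w -> ((a i)%:E <= g)%E) ->
  \sum_(i \in X) ((w \in U i)%:R : R) <= r ->
  (\sum_(i \in X) (a i / r)%:E * (\1_(U i) w)%:E <= g)%E.
Proof.
move=> fX r0 a0 g0 ag count; case: g g0 ag => [g| |] //= g0 ag; last exact: leey.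
under eq_fsbigr do rewrite -EFinM.
rewrite fsumEFin // lee_fin; apply: (@le_trans _ _ (\sum_(i \in X) g / r * ((w \in U i)%:R : R))).
  rewrite !fsbig_finite //; apply: ler_sum => i _; rewrite indicE.
  have [wU|] := boolP (w \in U i); last by rewrite !mulr0.
  by rewrite !mulr1 ler_pM2r ?invr_gt0 // -lee_fin; apply: ag; rewrite -inE.
rewrite -mulr_fsumr; apply: (@le_trans _ _ (g / r * r)); last by rewrite divfK ?lt0r_neq0.
by rewrite ler_wpM2l // divr_ge0 // ltW.
Qed.

Section RelativelySeparated.
Variables (R : realType) (G : ptopologicalType) (mul : G -> G -> G) (inv : G -> G) (e : G)
  (mu : {measure set (Borel G) -> \bar R}) (Q : set G) (I : choiceType) (lam : I -> G).
Hypotheses (HG : lcsc_group mul inv e) (HH : left_haar mul mu) (HQ : good_nbhd inv e Q)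
  (Hrel : (rel_sep (R:=R) mul Q lam < +oo)%E).

Let r : R := fine (rel_sep mul Q lam).
Let m : R := fine (mu Q).

Lemma rel_sep_ge0 : (0 <= rel_sep (R:=R) mul Q lam)%E.
Proof.
apply: le_trans (ereal_sup_ubound _); last by exists e.
exact: esum_ge0.
Qed.

Lemma rel_sepE : rel_sep mul Q lam = r%:E.
Proof. by rewrite /r fineK // ge0_fin_numE // rel_sep_ge0. Qed.

Lemma fsum_lcoset_le_rel x (X : set I) (P : I -> bool) : finite_set X ->
  (forall i, X i -> P i -> lcoset mul x Q (lam i)) -> \sum_(i \in X) ((P i)%:R : R) <= r.
Proof.
move=> fX XP; rewrite -lee_fin -rel_sepE -fsumEFin //.
have -> : \sum_(i \in X) ((P i)%:R : R)%:E = \sum_(i \in X `&` [set i | P i]) (1%E : \bar R).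
  rewrite fsbig_mkcondr; apply: eq_fsbigr => i _.
  by case: (boolP (P i)) => Pi; [rewrite mem_set | rewrite memNset //= (negbTE Pi)].
apply: le_trans (ereal_sup_ubound _); last by exists x.
apply: esum_ge; exists (X `&` [set i | P i]) => //; split; first exact: finite_setIl.
by move=> i [Xi /XP]; apply.
Qed.

Lemma rel_ge1 (i : I) : 1 <= r.
Proof.
have := @fsum_lcoset_le_rel (lam i) [set i] (fun j => j == i) (finite_set1 i).
by rewrite fsbig_set1 eqxx; apply => j _ /eqP ->; exact: (lcoset_refl HG HQ).
Qed.

Lemma measure_nbhd_fineK : m%:E = mu Q.
Proof. by rewrite /m fineK // (measure_nbhd_fin_num HH HQ). Qed.

Lemma esum_le_rel_integral (y : G) (a : I -> R) (g : G -> \bar R) :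
  (forall i, 0 <= a i) -> (forall w, (0 <= g w)%E) ->
  (forall i w, lcoset mul (mul (inv y) (lam i)) Q w -> ((a i)%:E <= g w)%E) ->
  (\esum_(i in [set: I]) (a i)%:E <= (r / m)%:E * \int[mu]_w g w)%E.
Proof.
move=> a0 g0 ag; pose U i := lcoset mul (mul (inv y) (lam i)) Q.
have m0 : 0 < m by rewrite -lte_fin measure_nbhd_fineK (measure_nbhd_gt0 HH HQ).
have mU i : measurable (U i : set (Borel G)) by apply: open_measurable; exact: (open_lcoset HG HQ).
have count w (X : set I) : finite_set X -> \sum_(i \in X) ((w \in U i)%:R : R) <= r.
  move=> fX; apply: (@fsum_lcoset_le_rel (mul y w) X (fun i => w \in U i)) => // i _.
  move=> /set_mem /(lcoset_sym HG HQ).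
  by move=> /(lcosetMl HG y); rewrite (mulKVg HG).
apply: ge_ereal_sup => _ [X [fX _] <-].
have [r0|r_le0] := ltrP 0 r; last first.
  rewrite fsbig1 => [|i _]; last by exfalso; have := rel_ge1 i; lra.
  have r_ge0 : 0 <= r by apply: fine_ge0; exact: rel_sep_ge0.
  by rewrite mule_ge0 ?integral_ge0 // lee_fin divr_ge0 // ltW.
have -> : (\sum_(i \in X) (a i)%:E = (r / m)%:E * \sum_(i \in X) (a i / r)%:E * mu (U i))%E.
  rewrite ge0_mule_fsumr => [|i]; last by rewrite mule_ge0 // lee_fin divr_ge0 // ltW.
  apply: eq_fsbigr => i _; rewrite (measure_lcoset HG HH HQ) -measure_nbhd_fineK -!EFinM.
  by congr EFin; field; rewrite !lt0r_neq0.
rewrite -integral_fsum_indic // => [|i]; last by rewrite divr_ge0 // ltW.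
apply: lee_wpmul2l; first by rewrite lee_fin divr_ge0 // ltW.
apply: (le_ge0_integral mu) => w.
  by rewrite fsume_ge0 // => i _; rewrite mule_ge0 // lee_fin ?indicE // divr_ge0 // ltW.
apply: fsum_indic_overlap_le => //; last exact: count.
by move=> i /ag.
Qed.

Lemma esum_le_conv (Phi Psi : G -> R) : continuous Phi -> continuous Psi ->
  (forall x, 0 <= Phi x) -> (forall x, 0 <= Psi x) -> forall x y : G,
  (\esum_(i in [set: I]) (Phi (mul (inv (lam i)) x) * Psi (mul (inv y) (lam i)))%:E
   <= (r / m)%:E * haar_conv mul inv mu (MQ mul mu Q Psi) (MQR mul mu Q Phi) (mul (inv y) x))%E.
Proof.
move=> cPhi cPsi Phi0 Psi0 x y.
apply: (esum_le_rel_integral (y := y)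
    (g := fun w => MQ mul mu Q Psi w * MQR mul mu Q Phi (mul (inv w) (mul (inv y) x)))%E)
  => [i|w|i w yiQw].
- by rewrite mulr_ge0.
- by apply: mule_ge0; [apply: (MQ_ge0 HG HH HQ) | apply: (MQR_ge0 HG HH HQ)].
rewrite mulrC EFinM; apply: lee_pmul; rewrite ?lee_fin //.
  by rewrite -(ger0_norm (Psi0 _)); apply: (le_MQ HG HH HQ cPsi); exact: (lcoset_sym HG HQ yiQw).
rewrite -(ger0_norm (Phi0 _)); apply: (le_MQR HG HH HQ cPhi).
have := lcoset_rcoset HG (mul (inv y) x) yiQw.
by rewrite (invMKg HG).
Qed.

Lemma esum_le_WLnorm (Psi : G -> R) : continuous Psi -> (forall x, 0 <= Psi x) ->
  forall y : G, (\esum_(i in [set: I]) (Psi (mul (inv y) (lam i)))%:E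
                 <= (r / m)%:E * WLnorm mul mu Q Psi)%E.
Proof.
move=> cPsi Psi0 y.
apply: (esum_le_rel_integral (y := y) (g := MQ mul mu Q Psi)) => // [w|i w yiQw].
  exact: (MQ_ge0 HG HH HQ).
by rewrite -(ger0_norm (Psi0 _)); apply: (le_MQ HG HH HQ cPsi); exact: (lcoset_sym HG HQ yiQw).
Qed.

Lemma finite_lcoset_index x : finite_set [set i | lcoset mul x Q (lam i)].
Proof.
apply: contrapT => /(infinite_set_fset (Num.truncn r).+1) [B BS Bn].
have := @fsum_lcoset_le_rel x _ (fun i => true) (finite_fset B).
rewrite fsbig_finite //= set_fsetK -natr_sum -card_fset_sum1 => /(_ (fun i iB _ => BS i iB)).
by move=> Br; have := truncnS_gt r; rewrite ltNge (le_trans _ Br) // ler_nat.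
Qed.

Lemma countable_index : exists h : I -> nat, injective h.
Proof.
case: HG => _ [_ [_ [_ [_ [_ [_ [K [cK KT]]]]]]]].
have cover n : exists S : set G, finite_set S /\ K n `<=` \bigcup_(x in S) lcoset mul x Q.
  have := cK n; rewrite compact_cover => /(_ G (K n) (fun x => lcoset mul x Q)) [].
  - by move=> x _; exact: (open_lcoset HG HQ).
  - by move=> x Kx; exists x => //; exact: (lcoset_refl HG HQ).
  by move=> D _ KD; eexists; split; last exact: KD; exact: finite_fset.
have /choice [S HS] := cover.
have : countable [set: I].
  apply: (@sub_countable _ _ _ (\bigcup_n \bigcup_(x in S n) [set i | lcoset mul x Q (lam i)])).
    apply: subset_card_le => i _; have : [set: G] (lam i) by [].
    rewrite -KT => -[n _ /(HS n).2 [x Sx xQi]]; by exists n => //; exists x.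
  apply: bigcup_countable => // n _; apply: bigcup_countable.
    exact/finite_set_countable/(HS n).1.
  by move=> x _; apply: finite_set_countable; exact: finite_lcoset_index.
by move/countable_injP => [h hinj]; exists h => i j hij; apply: hinj; rewrite ?inE.
Qed.

End RelativelySeparated.

Section ComplexFunctions.
Variables (R : realType) (G : ptopologicalType).

Lemma continuous_cabs (f : G -> R[i]) : ccontinuous f -> continuous (fun x => cabs (f x)).
Proof.
move=> [cRe cIm] x; apply: continuous_comp; last exact: sqrt_continuous.
by apply: cvgD; apply: cvgM; [exact: cRe | exact: cRe | exact: cIm | exact: cIm].
Qed.

Lemma measurable_cabs (f : G -> R[i]) : cmeasurable f ->
  measurable_fun [set: Borel G] (fun x => cabs (f x)).
Proof.
move=> [mRe mIm]; apply: measurableT_comp.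
  by apply: continuous_measurable_fun; exact: sqrt_continuous.
by apply: measurable_funD; apply: measurable_funM.
Qed.

Lemma cmeasurable_csum (I : choiceType) (h : I -> nat) (z : I -> G -> R[i]) :
  injective h -> (forall i, cmeasurable (z i)) -> cmeasurable (fun x => csum (fun i => z i x)).
Proof.
move=> h_inj mz; split; apply: (measurable_rsum h_inj) => i; [exact: (mz i).1 | exact: (mz i).2].
Qed.

End ComplexFunctions.

Section Synthesis.
Variables (R : realType) (G : ptopologicalType) (mul : G -> G -> G) (inv : G -> G) (e : G)
  (mu : {measure set (Borel G) -> \bar R}) (Q : set G) (I : choiceType) (lam : I -> G).
Hypotheses (HG : lcsc_group mul inv e) (HH : left_haar mul mu) (HQ : good_nbhd inv e Q)
  (Hrel : (rel_sep (R:=R) mul Q lam < +oo)%E).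
Variables (Theta : G -> R[i]) (c : I -> R[i]).
Hypotheses (cTheta : ccontinuous Theta) (mTheta : cmeasurable Theta)
  (Theta_int : (\int[mu]_x (cabs (Theta x))%:E < +oo)%E)
  (WTheta : in_WL mul mu Q (fun x => cabs (Theta (inv x))))
  (c_fin : (\esum_(i in [set: I]) (cabs (c i) ^+ 2)%:E < +oo)%E).

Let Psi x := cabs (Theta (inv x)).
Let alpha i x := cabs (Theta (mul (inv (lam i)) x)).
Let W := WLnorm mul mu Q Psi.
Let B := fine (rel_sep mul Q lam) / fine (mu Q) * fine W.

Let Psi_continuous : continuous Psi.
Proof.
move=> x; apply: (@continuous_comp _ _ _ inv (fun y => cabs (Theta y))).
  exact: (inv_continuous HG).
exact: continuous_cabs.
Qed.

Let alphaE i x : alpha i x = Psi (mul (inv x) (lam i)).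
Proof. by rewrite /Psi (invMg HG) (invgK HG). Qed.

Let W_fin : W \is a fin_num.
Proof.
case: WTheta => _ _ _ Wlt; rewrite ge0_fin_numE // integral_ge0 // => w _.
exact: (MQ_ge0 HG HH HQ).
Qed.

Let alpha_ge0 i x : 0 <= alpha i x.
Proof. exact: cabs_ge0. Qed.

Let B_ge0 : 0 <= B.
Proof.
apply: mulr_ge0; first by rewrite divr_ge0 // fine_ge0 // rel_sep_ge0.
by rewrite fine_ge0 // integral_ge0 // => w _; exact: (MQ_ge0 HG HH HQ).
Qed.

Lemma esum_alpha_le x : (\esum_(i in [set: I]) (alpha i x)%:E <= B%:E)%E.
Proof.
rewrite /B EFinM (fineK W_fin); under eq_esum do rewrite alphaE.
exact: (esum_le_WLnorm HG HH HQ Hrel Psi_continuous (fun y => cabs_ge0 _) x).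
Qed.

Lemma alpha_le i x : alpha i x <= B.
Proof.
rewrite -lee_fin; apply: le_trans (esum_alpha_le x); apply: esum_ge.
by exists [set i]; [split; [exact: finite_set1|] | rewrite fsbig_set1].
Qed.

Lemma esum_weighted_alpha_lt_pinfty x :
  (\esum_(i in [set: I]) (cabs (c i) ^+ 2 * alpha i x)%:E < +oo)%E.
Proof.
apply: (@le_lt_trans _ _ (\esum_(i in [set: I]) (B * cabs (c i) ^+ 2)%:E)%E).
  by apply: le_esum => i _; rewrite lee_fin mulrC ler_wpM2r ?sqr_ge0 ?alpha_le.
rewrite (esum_EFinZl _ B_ge0 (fun i => sqr_ge0 (cabs (c i)))).
by apply: lte_mul_pinfty; rewrite ?lee_fin.
Qed.

Lemma esum_synthesis_lt_pinfty x :
  (\esum_(i in [set: I]) (cabs (c i * Theta (mul (inv (lam i)) x)))%:E < +oo)%E.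
Proof.
under eq_esum do rewrite cabsM.
apply: esum_mul_lt_pinfty (esum_weighted_alpha_lt_pinfty x) => [i|i|]; rewrite ?cabs_ge0 //.
by apply: le_lt_trans (esum_alpha_le x) _; rewrite ltry.
Qed.

Lemma synthesis_sqr_le x :
  cabs (csum (fun i => c i * Theta (mul (inv (lam i)) x))) ^+ 2 <=
  B * fine (\esum_(i in [set: I]) (cabs (c i) ^+ 2 * alpha i x)%:E).
Proof.
have := csum_norm_le (esum_synthesis_lt_pinfty x); under eq_esum do rewrite cabsM.
move=> norm_le; apply: le_trans (esum_cauchy_schwarz (fun i => cabs_ge0 (c i))
  (fun i => alpha_ge0 i x) (esum_alpha_le x) (esum_weighted_alpha_lt_pinfty x)).
rewrite ler_sqr ?nnegrE ?cabs_ge0 //; apply: fine_ge0; apply: esum_ge0 => i _.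
by rewrite lee_fin mulr_ge0 ?cabs_ge0.
Qed.

Lemma cmeasurable_synthesis :
  cmeasurable (fun x => csum (fun i => c i * Theta (mul (inv (lam i)) x))).
Proof.
have [h h_inj] := countable_index HG HQ Hrel.
apply: (cmeasurable_csum h_inj) => i; have [mRe mIm] := mTheta.
have mRe_i := measurableT_comp mRe (lmul_measurable HG (inv (lam i))).
have mIm_i := measurableT_comp mIm (lmul_measurable HG (inv (lam i))).
split; [under eq_fun do rewrite ReM | under eq_fun do rewrite ImM].
- by apply: measurable_funB; apply: measurable_funM.
- by apply: measurable_funD; apply: measurable_funM.
Qed.

Let measurable_weighted_alpha i : measurable_fun [set: Borel G]
  (fun x => (cabs (c i) ^+ 2 * alpha i x)%:E).
Proof.
apply/measurable_EFinP; apply: measurable_funM => //.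
exact: measurableT_comp (measurable_cabs mTheta) (lmul_measurable HG _).
Qed.

Lemma integral_weighted_alpha :
  (\int[mu]_x (\esum_(i in [set: I]) (cabs (c i) ^+ 2 * alpha i x)%:E) =
   (\int[mu]_x (cabs (Theta x))%:E) * \esum_(i in [set: I]) (cabs (c i) ^+ 2)%:E)%E.
Proof.
have [h h_inj] := countable_index HG HQ Hrel.
have mTh : measurable_fun [set: Borel G] (fun x => (cabs (Theta x))%:E).
  by apply/measurable_EFinP; exact: measurable_cabs.
set M := (\int[mu]_x (cabs (Theta x))%:E)%E; have ME : M = (fine M)%:E.
  by rewrite fineK // ge0_fin_numE // integral_ge0 // => x _; rewrite lee_fin cabs_ge0.
rewrite (integral_esum h_inj _ _ measurable_weighted_alpha); last first.
  by move=> i x; rewrite lee_fin mulr_ge0 ?sqr_ge0.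
have M0 : 0 <= fine M.
  by apply: fine_ge0; rewrite integral_ge0 // => x _; rewrite lee_fin cabs_ge0.
rewrite ME -esum_EFinZl //; last by move=> i; exact: sqr_ge0.
apply: eq_esum => i _; under eq_integral do rewrite EFinM.
rewrite ge0_integralZl_EFin ?sqr_ge0 // => [|x _|]; last 2 first.
- by rewrite lee_fin.
- exact: measurableT_comp mTh (lmul_measurable HG _).
rewrite (integral_lmul HG HH (inv (lam i)) mTh) => [|y]; rewrite ?lee_fin ?cabs_ge0 //.
by rewrite -/M ME -EFinM mulrC.
Qed.

Lemma integral_synthesis_sqr_le :
  (\int[mu]_x (cabs (csum (fun i => c i * Theta (mul (inv (lam i)) x))) ^+ 2)%:E <=
   (fine (rel_sep mul Q lam) / fine (mu Q))%:E * (\int[mu]_x (cabs (Theta x))%:E) * W *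
   \esum_(i in [set: I]) (cabs (c i) ^+ 2)%:E)%E.
Proof.
have [h h_inj] := countable_index HG HQ Hrel.
have -> : ((fine (rel_sep mul Q lam) / fine (mu Q))%:E * (\int[mu]_x (cabs (Theta x))%:E) * W *
    (\esum_(i in [set: I]) (cabs (c i) ^+ 2)%:E) =
    B%:E * ((\int[mu]_x (cabs (Theta x))%:E) * \esum_(i in [set: I]) (cabs (c i) ^+ 2)%:E))%E.
  rewrite /B (EFinM (fine (rel_sep mul Q lam) / fine (mu Q))) (fineK W_fin) -!muleA.
  by congr (_ * _)%E; rewrite muleCA.
rewrite -integral_weighted_alpha -ge0_integralZl_EFin //; last 2 first.
- by move=> x _; apply: esum_ge0 => i _; rewrite lee_fin mulr_ge0 ?sqr_ge0.
- apply: (measurable_esum h_inj _ measurable_weighted_alpha) => i x.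
  by rewrite lee_fin mulr_ge0 ?sqr_ge0.
apply: le_ge0_integral => x; first by rewrite lee_fin sqr_ge0.
rewrite -(fineK (x := \esum_(i in _) _)); last first.
  rewrite ge0_fin_numE ?esum_weighted_alpha_lt_pinfty //.
  by apply: esum_ge0 => i _; rewrite lee_fin mulr_ge0 ?sqr_ge0.
by rewrite -EFinM lee_fin synthesis_sqr_le.
Qed.

End Synthesis.

Unset Implicit Arguments. Set Strict Implicit.

Theorem lemma2p4 (R : realType) (G : ptopologicalType)
  (mul : G -> G -> G) (inv : G -> G) (e : G)
  (mu : {measure set (Borel G) -> \bar R}) (Q : set G)
  (I : choiceType) (lam : I -> G) :
  lcsc_group mul inv e ->
  left_haar mul mu ->
  good_nbhd inv e Q ->
  (@rel_sep R G mul Q I lam < +oo)%E ->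
  let K : R := fine (rel_sep mul Q lam) / fine (mu Q) in
  (forall Phi Psi : G -> R,
     continuous Phi -> continuous Psi ->
     (forall x, 0 <= Phi x) -> (forall x, 0 <= Psi x) ->
     (forall x y : G,
        (\esum_(i in [set: I]) (Phi (mul (inv (lam i)) x) * Psi (mul (inv y) (lam i)))%:E
         <= K%:E * haar_conv mul inv mu (MQ mul mu Q Psi) (MQR mul mu Q Phi) (mul (inv y) x))%E) /\
     (forall y : G,
        (\esum_(i in [set: I]) (Psi (mul (inv y) (lam i)))%:E
         <= K%:E * WLnorm mul mu Q Psi)%E)) /\
  (forall Theta : G -> R[i],
     ccontinuous Theta ->
     cmeasurable Theta -> (\int[mu]_x (cabs (Theta x))%:E < +oo)%E ->
     in_WL mul mu Q (fun x => cabs (Theta (inv x))) ->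
     forall c : I -> R[i],
       (\esum_(i in [set: I]) ((cabs (c i)) ^+ 2)%:E < +oo)%E ->
       {ae mu, forall x : Borel G,
          (\esum_(i in [set: I]) (cabs (c i * Theta (mul (inv (lam i)) x)))%:E < +oo)%E} /\
       exists F : G -> R[i],
         cmeasurable F /\
         {ae mu, forall x : Borel G,
            F x = csum (fun i => c i * Theta (mul (inv (lam i)) x))} /\
         (\int[mu]_x ((cabs (F x)) ^+ 2)%:E
          <= K%:E * (\int[mu]_x (cabs (Theta x))%:E)
               * WLnorm mul mu Q (fun x => cabs (Theta (inv x)))
               * \esum_(i in [set: I]) ((cabs (c i)) ^+ 2)%:E)%E).
Proof.
move=> HG HH HQ Hrel K.
split=> [Phi Psi cPhi cPsi Phi0 Psi0|Theta cTheta mTheta Theta_int WTheta c c_fin].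
  split; [exact: (esum_le_conv HG HH HQ Hrel) | exact: (esum_le_WLnorm HG HH HQ Hrel)].
split; first exact/aeW/(esum_synthesis_lt_pinfty HG HH HQ Hrel cTheta WTheta c_fin).
exists (fun x => csum (fun i => c i * Theta (mul (inv (lam i)) x))).
split; first exact: (cmeasurable_synthesis HG HQ Hrel c mTheta).
split; first exact: aeW.
exact: (integral_synthesis_sqr_le HG HH HQ Hrel cTheta mTheta Theta_int WTheta c_fin).
Qed.
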